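(* Let $\rho>0$, $\alpha>0$, $\Omega_t\in\mathbb{S}^n$, $\bar W_t\in\mathbb{S}^n_+$ with $\operatorname{tr}(\bar W_t)=1$, $P_t\in\mathbb{R}^{n\times r}$ with $P_t^\top P_t=I_r$, and integers $r_p\ge0$, $r_c\ge1$ with $r_p\le r$. Let $(W_t^\star,y_t^\star)$ be a minimizer of $\min_{W\in\hat{\mathcal W}(\bar W_t,P_t),y\in\mathbb{R}^m}\langle W-C,\Omega_t\rangle-\langle b-\mathcal{A}(\Omega_t),y\rangle+\frac1{2\alpha}\|W-C+\mathcal{A}^*(y)\|^2$, written as $W_t^\star=\gamma_t^\star\bar W_t+P_tS_t^\star P_t^\top$ with $S_t^\star\in\mathbb{S}^r_+$, $\gamma_t^\star\ge0$, $\gamma_t^\star+\operatorname{tr}(S_t^\star)\le\rho$, and let $X_{t+1}^\star:=\Omega_t+\frac1\alpha(W_t^\star-C+\mathcal{A}^*(y_t^\star))$. Write an eigendecomposition $S_t^\star=Q_1\Sigma_1Q_1^\top+Q_2\Sigma_2Q_2^\top$ where $[Q_1\ Q_2]$ is orthogonal, $\Sigma_1\in\mathbb{S}^{r_p}$ is diagonal with the $r_p$ largest eigenvalues of $S_t^\star$ and $\Sigma_2$ diagonal with the remaining ones. Let $V_t\in\mathbb{R}^{n\times r_c}$ have orthonormal columns that are eigenvectors of $-X_{t+1}^\star$ for its $r_c$ largest eigenvalues. Let $P_{t+1}$ be any matrix with orthonormal columns whose column space equals that of $[V_t\ \ P_tQ_1]$, assume $\gamma_t^\star+\operatorname{tr}(\Sigma_2)>0$,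 and set $\bar W_{t+1}:=\frac{1}{\gamma_t^\star+\operatorname{tr}(\Sigma_2)}\big(\gamma_t^\star\bar W_t+P_tQ_2\Sigma_2Q_2^\top P_t^\top\big)$. Then, writing $\hat F_{t}:=\hat F_{(\bar W_t,P_t)}$ and $\hat F_{t+1}:=\hat F_{(\bar W_{t+1},P_{t+1})}$: (i) $\hat F_{t+1}(X)\le F(X)$ for all $X\in\mathbb{S}^n$; (ii) $\hat F_{t+1}(X)\ge F(X_{t+1}^\star)+\langle g,X-X_{t+1}^\star\rangle$ for all $X\in\mathbb{S}^n$, where $g=C-\rho vv^\top$ with $v$ the first column of $V_t$ if $\lambda_{\max}(-X_{t+1}^\star)>0$, and $g=C$ otherwise (in both cases $g\in\partial F(X_{t+1}^\star)$); (iii) if $\mathcal{A}(\Omega_t)$ is arbitrary but $X\in\mathcal{X}_0$, then $\hat F_{t+1}(X)\ge \hat F_t(X_{t+1}^\star)+\langle \alpha(\Omega_t-X_{t+1}^\star),X-X_{t+1}^\star\rangle$ for all $X\in\mathcal{X}_0$.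
   Context: Data: $b\in\mathbb{R}^m$, $C,A_1,\dots,A_m\in\mathbb{S}^n$ with $A_1,\dots,A_m$ linearly independent; $\langle X,Y\rangle=\operatorname{tr}(XY)$, $\|\cdot\|$ Frobenius norm; $\mathcal{A}(X)=(\langle A_i,X\rangle)_{i=1}^m$, $\mathcal{A}^*(y)=\sum_iy_iA_i$; $\mathcal{X}_0:=\{X\in\mathbb{S}^n:\mathcal{A}(X)=b\}$. $F(X):=\langle C,X\rangle+\rho\max\{\lambda_{\max}(-X),0\}$. For $\bar W\succeq0$ with trace $1$ and $P$ with orthonormal columns ($k$ columns): $\hat{\mathcal W}(\bar W,P):=\{\gamma\bar W+PSP^\top: S\in\mathbb{S}^k_+,\gamma\ge0,\gamma+\operatorname{tr}(S)\le\rho\}$ and $\hat F_{(\bar W,P)}(X):=\langle C,X\rangle+\max_{W\in\hat{\mathcal W}(\bar W,P)}\langle W,-X\rangle$. ($X_{t+1}^\star$ is the minimizer over $\mathcal{X}_0$ of $\hat F_t(X)+\frac\alpha2\|X-\Omega_t\|^2$.) *)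

From HB Require Import structures.
From mathcomp Require Import all_boot all_order all_algebra.
From mathcomp Require Import boolp classical_sets reals.
Set Implicit Arguments. Unset Strict Implicit. Unset Printing Implicit Defensive.
Import Order.TTheory GRing.Theory Num.Theory.
Local Open Scope ring_scope.
Local Open Scope classical_set_scope.

Section Defs.
Variable R : realType.

Definition psd k (M : 'M[R]_k) : Prop :=
  M^T = M /\ forall v : 'cV[R]_k, 0 <= (v^T *m M *m v) ord0 ord0.

Definition inner n (X Y : 'M[R]_n) : R := \tr (X *m Y).

Definition frob2 n (X : 'M[R]_n) : R := \tr (X^T *m X).

Definition vdot m (u v : 'cV[R]_m) : R := \sum_i u i ord0 * v i ord0.

Definition lambda_max n (M : 'M[R]_n) : R := sup [set a : R | eigenvalue M a].

Definition Fobj n (C : 'M[R]_n) (rho : R) (X : 'M[R]_n) : R :=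
  inner C X + rho * Num.max (lambda_max (- X)) 0.

Definition What n k (rho : R) (Wbar : 'M[R]_n) (P : 'M[R]_(n, k)) : set 'M[R]_n :=
  [set W | exists (gamma : R) (S : 'M[R]_k),
     [/\ psd S, 0 <= gamma, gamma + \tr S <= rho & W = gamma *: Wbar + P *m S *m P^T]].

Definition Fhat n k (C : 'M[R]_n) (rho : R) (Wbar : 'M[R]_n) (P : 'M[R]_(n, k))
    (X : 'M[R]_n) : R :=
  inner C X + sup [set inner W (- X) | W in What rho Wbar P].

Definition Aop n m (A : 'I_m -> 'M[R]_n) (X : 'M[R]_n) : 'cV[R]_m :=
  \col_i inner (A i) X.
Definition Astar n m (A : 'I_m -> 'M[R]_n) (y : 'cV[R]_m) : 'M[R]_n :=
  \sum_i y i ord0 *: A i.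

Definition dual_obj n m (A : 'I_m -> 'M[R]_n) (b : 'cV[R]_m) (C Omega : 'M[R]_n)
    (alpha : R) (W : 'M[R]_n) (y : 'cV[R]_m) : R :=
  inner (W - C) Omega - vdot (b - Aop A Omega) y
  + (2 * alpha)^-1 * frob2 (W - C + Astar A y).

End Defs.

From HB Require Import structures.
From mathcomp Require Import all_boot all_order all_algebra.
From mathcomp Require Import boolp classical_sets reals.
From mathcomp Require Import ring lra.
Import Order.TTheory GRing.Theory Num.Theory.
Local Open Scope ring_scope.
Local Open Scope classical_set_scope.
Set Implicit Arguments. Unset Strict Implicit. Unset Printing Implicit Defensive.

(* Every matrix in a model set hat W(Wbar, P) is positive semidefinite with trace at most rho,
   so <W, -X> <= rho max(lambda_max(-X), 0) and every such model minorizes F; this is (i).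
   Write X_{t+1} for the proximal point.  The new set contains the cut rho v v^T, v a unit top
   eigenvector of -X_{t+1} lying in the range of P_{t+1}; its value at X_{t+1} is F(X_{t+1}),
   and as a linear function of X it is the linearization of (ii).  The new set also contains
   the old optimum W_t = gamma Wbar_t + P Q1 S1 Q1^T P^T + P Q2 S2 Q2^T P^T: the first and last
   terms are exactly the rescaled new aggregate Wbar_{t+1}, the middle one lives in the range of
   P_{t+1}.  The optimality conditions of the dual subproblem (A(X_{t+1}) = b from stationarity
   in y, <W - W_t, X_{t+1}> >= 0 on the old set from convexity in W) turn the cut of W_t into
   the proximal cut (iii).  The only spectral fact needed, existence of a top eigenvector of a
   symmetric matrix, comes from the supremum of its Rayleigh quotients. *)

Section QuadraticForms.
Variable R : realType.

Definition bil n (M : 'M[R]_n) (v w : 'cV[R]_n) : R := (v^T *m M *m w) ord0 ord0.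
Definition nrm2 n (v : 'cV[R]_n) : R := (v^T *m v) ord0 ord0.

Lemma nrm2E n (v : 'cV[R]_n) : nrm2 v = \sum_i v i ord0 ^+ 2.
Proof. by rewrite /nrm2 mxE; apply: eq_bigr => i _; rewrite mxE expr2. Qed.

Lemma nrm2_ge0 n (v : 'cV[R]_n) : 0 <= nrm2 v.
Proof. by rewrite nrm2E sumr_ge0 // => i _; rewrite sqr_ge0. Qed.

Lemma nrm2_eq0 n (v : 'cV[R]_n) : nrm2 v = 0 -> v = 0.
Proof.
rewrite nrm2E => /eqP; rewrite psumr_eq0 => [/allP H|i _]; last exact: sqr_ge0.
apply/matrixP => i j; rewrite (ord1 j) mxE.
by have /= := H i (mem_index_enum _); rewrite sqrf_eq0 => /eqP.
Qed.

Lemma nrm2_gt0 n (v : 'cV[R]_n) : v != 0 -> 0 < nrm2 v.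
Proof.
move=> vn0; rewrite lt_def nrm2_ge0 andbT; apply/eqP => /nrm2_eq0 v0.
by rewrite v0 eqxx in vn0.
Qed.

Lemma bil_sym n (M : 'M[R]_n) v w : M^T = M -> bil M w v = bil M v w.
Proof.
move=> sM; have tr11 (X : 'M[R]_1) : X ord0 ord0 = X^T ord0 ord0 by rewrite mxE.
by rewrite /bil tr11 !trmx_mul trmxK sM mulmxA.
Qed.

Lemma bilDl n (M : 'M[R]_n) u v w : bil M (u + v) w = bil M u w + bil M v w.
Proof. by rewrite /bil linearD /= !mulmxDl mxE. Qed.
Lemma bilDr n (M : 'M[R]_n) u v w : bil M w (u + v) = bil M w u + bil M w v.
Proof. by rewrite /bil mulmxDr mxE. Qed.
Lemma bilZl n (M : 'M[R]_n) t v w : bil M (t *: v) w = t * bil M v w.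
Proof. by rewrite /bil linearZ /= -!scalemxAl mxE. Qed.
Lemma bilZr n (M : 'M[R]_n) t v w : bil M w (t *: v) = t * bil M w v.
Proof. by rewrite /bil -!scalemxAr mxE. Qed.
Lemma bil0l n (M : 'M[R]_n) w : bil M 0 w = 0.
Proof. by rewrite /bil trmx0 !mul0mx mxE. Qed.
Lemma bilBm n (M N : 'M[R]_n) v w : bil (M - N) v w = bil M v w - bil N v w.
Proof. by rewrite /bil mulmxBr mulmxBl !mxE. Qed.
Lemma bilNm n (M : 'M[R]_n) v w : bil (- M) v w = - bil M v w.
Proof. by rewrite /bil mulmxN mulNmx mxE. Qed.
Lemma bilZm n (M : 'M[R]_n) a v w : bil (a *: M) v w = a * bil M v w.
Proof. by rewrite /bil -scalemxAr -scalemxAl mxE. Qed.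
Lemma bil_scalar n (a : R) v w : bil (a%:M : 'M[R]_n) v w = a * (v^T *m w) ord0 ord0.
Proof. by rewrite /bil mul_mx_scalar -scalemxAl mxE. Qed.

Lemma bil_eigen n (M : 'M[R]_n) mu u : M *m u = mu *: u -> bil M u u = mu * nrm2 u.
Proof. by move=> Mu; rewrite /bil -mulmxA Mu -scalemxAr mxE. Qed.

Lemma bil_rank1 n (u v : 'cV[R]_n) : bil (u *m u^T) v v = (u^T *m v) ord0 ord0 ^+ 2.
Proof.
rewrite /bil !mulmxA -(mulmxA (v^T *m u)) mxE big_ord1 expr2; congr (_ * _).
by rewrite (_ : u^T *m v = (v^T *m u)^T) ?mxE // trmx_mul trmxK.
Qed.

Lemma discr_le (a b c : R) : 0 <= c ->
  (forall t, 0 <= a + 2 * t * b + t ^+ 2 * c) -> b ^+ 2 <= a * c.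
Proof.
move=> c0 H; have [c_eq0|cn0] := eqVneq c 0.
  rewrite c_eq0 in H *; have [->|bn0] := eqVneq b 0; first by rewrite expr0n mulr0.
  have := H (- (a + 1) / (2 * b)).
  have -> : a + 2 * (- (a + 1) / (2 * b)) * b + (- (a + 1) / (2 * b)) ^+ 2 * 0 = -1.
    by field; rewrite bn0.
  by rewrite ler0N1.
have cp : 0 < c by rewrite lt_def cn0.
have := H (- b / c).
have -> : a + 2 * (- b / c) * b + (- b / c) ^+ 2 * c = (a * c - b ^+ 2) / c by field.
by rewrite pmulr_lge0 ?invr_gt0 // subr_ge0.
Qed.

Lemma bil_cauchy_schwarz n (M : 'M[R]_n) u v : M^T = M -> (forall w, 0 <= bil M w w) ->
  bil M u v ^+ 2 <= bil M u u * bil M v v.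
Proof.
move=> sM psdM; apply: discr_le => // t.
have := psdM (u + t *: v).
by rewrite bilDl !bilDr !bilZl !bilZr (bil_sym _ _ sM); congr (_ <= _); ring.
Qed.

Definition mx_l1 n (M : 'M[R]_n) : R := \sum_i \sum_j `|M i j|.

Lemma mx_l1_ge0 n (M : 'M[R]_n) : 0 <= mx_l1 M.
Proof. by apply: sumr_ge0 => i _; apply: sumr_ge0. Qed.

Lemma bil_le_l1 n (M : 'M[R]_n) v : bil M v v <= mx_l1 M * nrm2 v.
Proof.
have sq_le i : `|v i ord0| ^+ 2 <= nrm2 v.
  by rewrite real_normK ?num_real // nrm2E (bigD1 i) //= lerDl sumr_ge0 // => j _; exact: sqr_ge0.
apply: le_trans (ler_norm _) _.
rewrite /bil mxE /mx_l1 exchange_big mulr_suml; apply: (le_trans (ler_norm_sum _ _ _)).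
apply: ler_sum => j _; rewrite mxE mulr_suml big_distrl /=.
apply: (le_trans (ler_norm_sum _ _ _)); apply: ler_sum => i _.
rewrite !mxE !normrM mulrAC [_ * nrm2 v]mulrC ler_wpM2r //.
have := sq_le i; have := sq_le j; have := sqr_ge0 (`|v i ord0| - `|v j ord0|); nra.
Qed.

End QuadraticForms.

Section Spectral.
Variable R : realType.

Lemma le_sup_ub (E : set R) x B : (forall y, E y -> y <= B) -> E x -> x <= sup E.
Proof. by move=> ubB Ex; apply: ub_le_sup Ex; exists B => y /ubB. Qed.

Lemma sup_le_ub (E : set R) x B : (forall y, E y -> y <= B) -> E x -> sup E <= B.
Proof. by move=> ubB Ex; apply: ge_sup; [exists x | exact: ubB]. Qed.

Lemma eigenvalue_symP n (M : 'M[R]_n) a : M^T = M ->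
  eigenvalue M a <-> exists2 u : 'cV[R]_n, u != 0 & M *m u = a *: u.
Proof.
move=> sM; split.
  move=> /eigenvalueP [z zM zn0]; exists z^T.
    by apply: contra zn0 => /eqP z0; apply/eqP; rewrite -[z]trmxK z0 trmx0.
  by rewrite -sM -trmx_mul zM linearZ.
move=> [u un0 Mu]; apply/eigenvalueP; exists u^T.
  by rewrite -[M]sM -trmx_mul Mu linearZ.
by apply: contra un0 => /eqP u0; apply/eqP; rewrite -[u]trmxK u0 trmx0.
Qed.

Lemma lambda_max_eq n (M : 'M[R]_n) mu (u : 'cV[R]_n) : M^T = M -> u != 0 -> M *m u = mu *: u ->
  (forall a (z : 'cV[R]_n), z != 0 -> M *m z = a *: z -> a <= mu) ->
  lambda_max M = mu.
Proof.
move=> sM un0 Mu top.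
have Emu : eigenvalue M mu by apply/(eigenvalue_symP _ sM); exists u.
have ub a : eigenvalue M a -> a <= mu.
  by move/(eigenvalue_symP _ sM) => [z zn0 Mz]; exact: top Mz.
by apply/le_anti; rewrite (sup_le_ub ub Emu) (le_sup_ub ub Emu).
Qed.

Lemma psd_unit_coercive n (K : 'M[R]_n) : K^T = K -> (forall v, 0 <= bil K v v) ->
  K \in unitmx -> exists2 c, 0 < c & forall v, nrm2 v <= c * bil K v v.
Proof.
move=> sK psdK Ku; pose J := invmx K.
have JK : J^T *m K = 1%:M by rewrite -sK -trmx_mul mulmxV // tr_scalar_mx.
exists (mx_l1 J + 1) => [|v]; first by rewrite ltr_wpDl ?mx_l1_ge0.
have [->|vn0] := eqVneq v 0; first by rewrite bil0l /nrm2 trmx0 mul0mx mxE mulr0.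
(* Cauchy-Schwarz for K applied to J v and v, using K (J v) = v *)
have := bil_cauchy_schwarz (J *m v) v sK psdK.
have -> : bil K (J *m v) v = nrm2 v by rewrite /bil trmx_mul -(mulmxA _ J^T K) JK mulmx1.
have -> : bil K (J *m v) (J *m v) = bil J v v.
  by rewrite /bil trmx_mul -(mulmxA _ J^T K) JK mulmx1 mulmxA.
have := bil_le_l1 J v; have := nrm2_gt0 vn0; have := psdK v; have := mx_l1_ge0 J.
nra.
Qed.

Lemma rayleigh_top_eigen n (M : 'M[R]_n.+1) : M^T = M -> exists mu (u : 'cV[R]_n.+1),
  [/\ u != 0, M *m u = mu *: u & forall v, bil M v v <= mu * nrm2 v].
Proof.
move=> sM.
pose E := [set bil M v v / nrm2 v | v in [set v : 'cV[R]_n.+1 | v != 0]].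
have Eub y : E y -> y <= mx_l1 M.
  by case=> v /= vn0 <-; rewrite ler_pdivrMr ?nrm2_gt0 ?bil_le_l1.
pose one : 'cV[R]_n.+1 := const_mx 1.
have one_n0 : one != 0.
  by apply/eqP => /matrixP /(_ ord0 ord0); rewrite !mxE; apply/eqP; exact: oner_neq0.
have E1 : E (bil M one one / nrm2 one) by exists one.
set mu := sup E.
have mu_ub v : bil M v v <= mu * nrm2 v.
  have [->|vn0] := eqVneq v 0; first by rewrite bil0l /nrm2 trmx0 mul0mx mxE mulr0.
  by rewrite -ler_pdivrMr ?nrm2_gt0 //; apply: (le_sup_ub Eub); exists v.
pose K := mu%:M - M.
have sK : K^T = K by rewrite /K linearB /= tr_scalar_mx sM.
have bilK v : bil K v v = mu * nrm2 v - bil M v v by rewrite /K bilBm bil_scalar.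
have psdK v : 0 <= bil K v v by rewrite bilK subr_ge0.
(* a coercive K would push every Rayleigh quotient below mu - 1/c *)
have K_sing : K \notin unitmx.
  apply/negP => /(psd_unit_coercive sK psdK) [c c0 coer].
  have ub y : E y -> y <= mu - c^-1.
    case=> v /= vn0 <-; have np := nrm2_gt0 vn0.
    have := coer v; rewrite bilK -ler_pdivrMl // ler_pdivrMr //.
    rewrite mulrBl mulrC; lra.
  have := sup_le_ub ub E1; have := invr_gt0 c; rewrite c0 -/mu; lra.
have : eigenvalue M mu.
  rewrite /eigenvalue /eigenspace kermx_eq0 row_free_unit.
  have -> : M - mu%:M = (-1) *: K by rewrite /K scaleN1r opprB.
  by rewrite unitmxZ ?unitrN1.
move=> /(eigenvalue_symP _ sM) [u un0 Mu].
by exists mu, u.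
Qed.

Lemma bil_le_lambda_max n (M : 'M[R]_n) v : M^T = M -> bil M v v <= lambda_max M * nrm2 v.
Proof.
case: n M v => [|n] M v sM; first by rewrite /bil /nrm2 !mxE !big_ord0 mulr0.
have [mu [u [un0 Mu mu_ub]]] := rayleigh_top_eigen sM.
suff -> : lambda_max M = mu by [].
apply: lambda_max_eq sM un0 Mu _ => a z zn0 Mz.
by have := mu_ub z; rewrite (bil_eigen Mz) ler_pM2r ?nrm2_gt0.
Qed.

End Spectral.

Section Semidefinite.
Variable R : realType.

Lemma psd_bil n (W : 'M[R]_n) v : psd W -> 0 <= bil W v v.
Proof. by case=> _; apply. Qed.

Lemma psd_congr n k (S : 'M[R]_k) (Q : 'M[R]_(n, k)) : psd S -> psd (Q *m S *m Q^T).
Proof.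
case=> sS psdS; split; first by rewrite !trmx_mul trmxK sS mulmxA.
by move=> v; have := psdS (Q^T *m v); rewrite trmx_mul trmxK !mulmxA.
Qed.

Lemma psdD n (W1 W2 : 'M[R]_n) : psd W1 -> psd W2 -> psd (W1 + W2).
Proof.
case=> s1 p1 [s2 p2]; split; first by rewrite linearD /= s1 s2.
by move=> v; rewrite mulmxDr mulmxDl mxE addr_ge0.
Qed.

Lemma psdZ n (W : 'M[R]_n) a : 0 <= a -> psd W -> psd (a *: W).
Proof.
move=> a0 [sW pW]; split; first by rewrite linearZ /= sW.
by move=> v; rewrite -scalemxAr -scalemxAl mxE mulr_ge0.
Qed.

Lemma psd0 n : psd (0 : 'M[R]_n).
Proof. by split=> [|v]; rewrite ?trmx0 // mulmx0 mul0mx mxE. Qed.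

Lemma psd1 n : psd (1%:M : 'M[R]_n).
Proof. by split=> [|v]; rewrite ?tr_scalar_mx // mulmx1 nrm2_ge0. Qed.

Lemma psd_rank1 n (w : 'cV[R]_n) : psd (w *m w^T).
Proof.
split=> [|v]; first by rewrite trmx_mul trmxK.
by have := bil_rank1 w v; rewrite /bil => ->; exact: sqr_ge0.
Qed.

Lemma psd_eq0 n (W : 'M[R]_n) : W^T = W -> (forall v, bil W v v = 0) -> W = 0.
Proof.
move=> sW W0.
have Wv_eq0 (v : 'cV[R]_n) : W *m v = 0.
  have psdW w : 0 <= bil W w w by rewrite W0.
  apply: nrm2_eq0; have := bil_cauchy_schwarz (W *m v) v sW psdW.
  have -> : bil W (W *m v) v = nrm2 (W *m v) by rewrite /bil /nrm2 trmx_mul sW !mulmxA.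
  by rewrite !W0 mulr0 => sq_le0; apply/eqP; rewrite -sqrf_eq0 eq_le sq_le0 sqr_ge0.
apply/matrixP => i j; have := Wv_eq0 (delta_mx j ord0).
by rewrite -colE => /matrixP /(_ i ord0); rewrite !mxE.
Qed.

Lemma psd_deflate n (W : 'M[R]_n) mu (u : 'cV[R]_n) :
  psd W -> u != 0 -> W *m u = mu *: u -> 0 < mu ->
  let W' := W - (mu / nrm2 u) *: (u *m u^T) in psd W' /\ (\rank W' < \rank W)%N.
Proof.
move=> psdW un0 Wu mu_gt0 W'.
have sW : W^T = W by case: psdW.
have np := nrm2_gt0 un0.
have uW : u^T *m W = mu *: u^T by rewrite -sW -trmx_mul Wu linearZ.
split.
  split=> [|v]; first by rewrite /W' linearB /= linearZ /= trmx_mul trmxK sW.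
  change (0 <= bil W' v v); rewrite /W' bilBm bilZm bil_rank1.
  set s := (u^T *m v) ord0 ord0.
  have := bil_cauchy_schwarz u v sW (fun w => psd_bil w psdW).
  have -> : bil W u v = mu * s by rewrite /bil uW -scalemxAl mxE.
  rewrite (bil_eigen Wu) exprMn expr2 -!mulrA ler_pM2l // => cs.
  by rewrite subr_ge0 mulrCA ler_pdivrMl.
have W'u : W' *m u = 0.
  rewrite /W' mulmxBl Wu -scalemxAl -mulmxA.
  have -> : u^T *m u = (nrm2 u)%:M.
    by apply/matrixP => i j; rewrite (ord1 i) (ord1 j) [in RHS]mxE eqxx mulr1n.
  by rewrite mul_mx_scalar scalerA divfK ?gt_eqF ?subrr.
have W'_sub : (W' <= W)%MS.
  have -> : W' = (1%:M - (nrm2 u)^-1 *: (u *m u^T)) *m W.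
    by rewrite mulmxBl mul1mx -scalemxAl -mulmxA uW -scalemxAr scalerA mulrC.
  exact: submxMl.
have [rk_le rk_eq] := mxrank_leqif_sup W'_sub.
rewrite ltn_neqAle rk_le andbT rk_eq; apply/negP => /submxP [D eW].
move: Wu; rewrite eW -mulmxA W'u mulmx0 => /esym /eqP.
by rewrite scaler_eq0 gt_eqF //= (negbTE un0).
Qed.

(* induction on the rank of W, peeling off a top eigenvector each time *)
Lemma trace_psd n (W K : 'M[R]_n) : psd W -> psd K -> 0 <= \tr (W *m K).
Proof.
case: n W K => [|n] W K psdW psdK; first by rewrite /mxtrace big_ord0.
move: {2}(\rank W) (leqnn (\rank W)) => p; elim: p W psdW => [|p IH] W psdW rkW.
  by move: rkW; rewrite leqn0 mxrank_eq0 => /eqP ->; rewrite mul0mx linear0.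
have sW : W^T = W by case: psdW.
have [mu [u [un0 Wu mu_ub]]] := rayleigh_top_eigen sW.
have [mu_gt0|mu_le0] := ltrP 0 mu; last first.
  suff -> : W = 0 by rewrite mul0mx linear0.
  apply: psd_eq0 sW _ => v; apply/le_anti; rewrite psd_bil // andbT.
  exact: le_trans (mu_ub v) (mulr_le0_ge0 mu_le0 (nrm2_ge0 v)).
have [psdW' rk_lt] := psd_deflate psdW un0 Wu mu_gt0.
set c := mu / nrm2 u in psdW' rk_lt *.
have -> : W = (W - c *: (u *m u^T)) + c *: (u *m u^T) by rewrite subrK.
rewrite mulmxDl mxtraceD -scalemxAl mxtraceZ -mulmxA (mxtrace_mulC u) trace_mx11.
apply: addr_ge0; last by rewrite mulr_ge0 ?divr_ge0 ?psd_bil ?nrm2_ge0 ?(ltW mu_gt0).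
by apply: IH psdW' _; rewrite -ltnS (leq_trans rk_lt).
Qed.

Lemma trace_psd_ge0 n (W : 'M[R]_n) : psd W -> 0 <= \tr W.
Proof. by move=> psdW; have := trace_psd psdW (psd1 n); rewrite mulmx1. Qed.

Lemma trace_le_lambda_max n (W M : 'M[R]_n) : psd W -> M^T = M ->
  \tr (W *m M) <= lambda_max M * \tr W.
Proof.
move=> psdW sM.
have psdK : psd ((lambda_max M)%:M - M).
  split=> [|v]; first by rewrite linearB /= tr_scalar_mx sM.
  change (0 <= bil ((lambda_max M)%:M - M) v v).
  by rewrite bilBm bil_scalar subr_ge0 bil_le_lambda_max.
have := trace_psd psdW psdK.
by rewrite mulmxBr linearB /= mul_mx_scalar mxtraceZ subr_ge0.
Qed.

Lemma trace_le_max_lambda n (W M : 'M[R]_n) (rho : R) : psd W -> M^T = M -> \tr W <= rho ->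
  \tr (W *m M) <= rho * Num.max (lambda_max M) 0.
Proof.
move=> psdW sM trW; apply: (le_trans (trace_le_lambda_max psdW sM)).
have tr_ge0 := trace_psd_ge0 psdW.
apply: (@le_trans _ _ (Num.max (lambda_max M) 0 * \tr W)).
  by rewrite ler_wpM2r // le_max lexx.
by rewrite mulrC ler_wpM2r // le_max lexx orbT.
Qed.

End Semidefinite.

Section InnerProducts.
Variable R : realType.

Lemma innerDl n (X Y Z : 'M[R]_n) : inner (X + Y) Z = inner X Z + inner Y Z.
Proof. by rewrite /inner mulmxDl mxtraceD. Qed.
Lemma innerDr n (X Y Z : 'M[R]_n) : inner Z (X + Y) = inner Z X + inner Z Y.
Proof. by rewrite /inner mulmxDr mxtraceD. Qed.
Lemma innerZl n (X Z : 'M[R]_n) a : inner (a *: X) Z = a * inner X Z.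
Proof. by rewrite /inner -scalemxAl mxtraceZ. Qed.
Lemma innerZr n (X Z : 'M[R]_n) a : inner Z (a *: X) = a * inner Z X.
Proof. by rewrite /inner -scalemxAr mxtraceZ. Qed.
Lemma innerNl n (X Z : 'M[R]_n) : inner (- X) Z = - inner X Z.
Proof. by rewrite /inner mulNmx linearN. Qed.
Lemma innerNr n (X Z : 'M[R]_n) : inner Z (- X) = - inner Z X.
Proof. by rewrite /inner mulmxN linearN. Qed.
Lemma innerBl n (X Y Z : 'M[R]_n) : inner (X - Y) Z = inner X Z - inner Y Z.
Proof. by rewrite innerDl innerNl. Qed.
Lemma innerBr n (X Y Z : 'M[R]_n) : inner Z (X - Y) = inner Z X - inner Z Y.
Proof. by rewrite innerDr innerNr. Qed.
Lemma inner0l n (X : 'M[R]_n) : inner 0 X = 0.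
Proof. by rewrite /inner mul0mx linear0. Qed.
Lemma inner_rank1 n (v : 'cV[R]_n) Y : inner (v *m v^T) Y = bil Y v v.
Proof. by rewrite /inner -mulmxA mxtrace_mulC trace_mx11. Qed.

Lemma frob2_ge0 n (X : 'M[R]_n) : 0 <= frob2 X.
Proof. by have := trace_psd_ge0 (psd_congr X^T (psd1 R n)); rewrite mulmx1 trmxK. Qed.

Lemma frob2D n (Z Y : 'M[R]_n) t :
  frob2 (Z + t *: Y) = frob2 Z + 2 * t * inner Y^T Z + t ^+ 2 * frob2 Y.
Proof.
rewrite /frob2 /inner.
have -> : (Z + t *: Y)^T = Z^T + t *: Y^T by rewrite linearD /= linearZ.
rewrite mulmxDl !mulmxDr -!scalemxAl -!scalemxAr.
rewrite !mxtraceD !mxtraceZ -[\tr (Z^T *m Y)]mxtrace_tr trmx_mul trmxK.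
ring.
Qed.

Lemma AstarD n m (A : 'I_m -> 'M[R]_n) y z : Astar A (y + z) = Astar A y + Astar A z.
Proof. by rewrite /Astar -big_split; apply: eq_bigr => i _; rewrite mxE scalerDl. Qed.
Lemma AstarZ n m (A : 'I_m -> 'M[R]_n) t y : Astar A (t *: y) = t *: Astar A y.
Proof. by rewrite /Astar scaler_sumr; apply: eq_bigr => i _; rewrite mxE scalerA. Qed.
Lemma Astar_delta n m (A : 'I_m -> 'M[R]_n) i : Astar A (delta_mx i ord0) = A i.
Proof.
rewrite /Astar (bigD1 i) //= mxE !eqxx scale1r big1 ?addr0 // => j /negbTE ji.
by rewrite mxE ji scale0r.
Qed.
Lemma Astar_sym n m (A : 'I_m -> 'M[R]_n) y : (forall i, (A i)^T = A i) ->
  (Astar A y)^T = Astar A y.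
Proof.
by move=> sA; rewrite /Astar linear_sum; apply: eq_bigr => i _; rewrite linearZ /= sA.
Qed.
Lemma inner_Astar n m (A : 'I_m -> 'M[R]_n) y X :
  inner (Astar A y) X = \sum_i y i ord0 * inner (A i) X.
Proof.
rewrite /inner /Astar mulmx_suml linear_sum; apply: eq_bigr => i _.
by rewrite -scalemxAl /= mxtraceZ.
Qed.

Lemma vdotD m (u y z : 'cV[R]_m) : vdot u (y + z) = vdot u y + vdot u z.
Proof. by rewrite /vdot -big_split; apply: eq_bigr => i _; rewrite mxE mulrDr. Qed.
Lemma vdotZ m (u y : 'cV[R]_m) t : vdot u (t *: y) = t * vdot u y.
Proof. by rewrite /vdot mulr_sumr; apply: eq_bigr => i _; rewrite mxE mulrCA. Qed.
Lemma vdot_delta m (u : 'cV[R]_m) i : vdot u (delta_mx i ord0) = u i ord0.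
Proof.
rewrite /vdot (bigD1 i) //= mxE !eqxx mulr1 big1 ?addr0 // => j /negbTE ji.
by rewrite mxE ji mulr0.
Qed.

Lemma dual_obj_shift_y n m (A : 'I_m -> 'M[R]_n) b C Om alpha W y e t : alpha != 0 ->
  dual_obj A b C Om alpha W (y + t *: e) = dual_obj A b C Om alpha W y
   + t * (- vdot (b - Aop A Om) e + alpha^-1 * inner (Astar A e)^T (W - C + Astar A y))
   + t ^+ 2 * ((2 * alpha)^-1 * frob2 (Astar A e)).
Proof.
move=> a0; rewrite /dual_obj vdotD vdotZ AstarD AstarZ addrA frob2D.
by field.
Qed.

Lemma dual_obj_shift_W n m (A : 'I_m -> 'M[R]_n) b C Om alpha W D y t : alpha != 0 ->
  dual_obj A b C Om alpha (W + t *: D) y = dual_obj A b C Om alpha W y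
   + t * (inner D Om + alpha^-1 * inner D^T (W - C + Astar A y))
   + t ^+ 2 * ((2 * alpha)^-1 * frob2 D).
Proof.
move=> a0; rewrite /dual_obj.
have -> : W + t *: D - C + Astar A y = (W - C + Astar A y) + t *: D.
  by rewrite -!addrA; congr (_ + _); rewrite addrC -addrA.
have -> : W + t *: D - C = W - C + t *: D by rewrite addrAC.
rewrite (innerDl (W - C)) innerZl frob2D.
by field.
Qed.

End InnerProducts.

Section CuttingPlaneModel.
Variable R : realType.
Variables (n k : nat) (rho : R) (Wbar : 'M[R]_n) (P : 'M[R]_(n, k)).

Lemma What_psd W : psd Wbar -> What rho Wbar P W -> psd W.
Proof. by move=> psdWb [g [S [psdS g0 _ ->]]]; apply: psdD; [exact: psdZ | exact: psd_congr]. Qed.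

Lemma What_trace_le W : \tr Wbar = 1 -> P^T *m P = 1%:M -> What rho Wbar P W -> \tr W <= rho.
Proof.
move=> trWb PP [g [S [_ _ trS ->]]].
by rewrite mxtraceD mxtraceZ trWb mulr1 mxtrace_mulC mulmxA PP mul1mx.
Qed.

Lemma What0 : 0 <= rho -> What rho Wbar P 0.
Proof.
move=> rho0; exists 0, 0; split; [exact: psd0 | by [] | by rewrite linear0 addr0 |].
by rewrite scale0r mulmx0 mul0mx addr0.
Qed.

Lemma What_convex W1 W2 t : 0 <= t -> t <= 1 ->
  What rho Wbar P W1 -> What rho Wbar P W2 -> What rho Wbar P (W1 + t *: (W2 - W1)).
Proof.
move=> t0 t1 [g1 [S1 [psdS1 g1_0 trS1 ->]]] [g2 [S2 [psdS2 g2_0 trS2 ->]]].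
exists ((1 - t) * g1 + t * g2), ((1 - t) *: S1 + t *: S2); split.
- by apply: psdD; apply: psdZ; rewrite ?subr_ge0.
- by rewrite addr_ge0 // mulr_ge0 // subr_ge0.
- rewrite mxtraceD !mxtraceZ; nra.
- rewrite mulmxDr mulmxDl -!scalemxAr -!scalemxAl.
  by apply/matrixP => i j; rewrite !mxE; ring.
Qed.

Lemma What_rank1 (v : 'cV[R]_n) : 0 <= rho -> P *m P^T *m v = v -> nrm2 v = 1 ->
  What rho Wbar P (rho *: (v *m v^T)).
Proof.
move=> rho0 Pv nv; exists 0, (rho *: ((P^T *m v) *m (P^T *m v)^T)); split.
- exact: psdZ (psd_rank1 _).
- by [].
- rewrite add0r mxtraceZ mxtrace_mulC trace_mx11.
  by rewrite trmx_mul trmxK -mulmxA (mulmxA P) Pv -/(nrm2 v) nv mulr1.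
- rewrite scale0r add0r -scalemxAr -scalemxAl; congr (_ *: _).
  by rewrite !mulmxA Pv -mulmxA -trmx_mul mulmxA Pv.
Qed.

Hypotheses (psdWb : psd Wbar) (trWb : \tr Wbar = 1) (PP : P^T *m P = 1%:M).

Lemma What_value_le W (X : 'M[R]_n) : X^T = X -> What rho Wbar P W ->
  inner W (- X) <= rho * Num.max (lambda_max (- X)) 0.
Proof.
move=> sX hW; apply: trace_le_max_lambda (What_psd psdWb hW) _ (What_trace_le trWb PP hW).
by rewrite linearN /= sX.
Qed.

Lemma Fhat_le_Fobj C (X : 'M[R]_n) : 0 <= rho -> X^T = X -> Fhat C rho Wbar P X <= Fobj C rho X.
Proof.
move=> rho0 sX; rewrite /Fhat /Fobj lerD2l.
apply: (sup_le_ub _ (imageP _ (What0 rho0))) => _ [W hW <-].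
exact: What_value_le.
Qed.

Lemma Fhat_ge C W (X : 'M[R]_n) : X^T = X -> What rho Wbar P W ->
  inner C X + inner W (- X) <= Fhat C rho Wbar P X.
Proof.
move=> sX hW; rewrite /Fhat lerD2l; apply: (le_sup_ub _ (imageP _ hW)).
by move=> _ [W' hW' <-]; exact: What_value_le.
Qed.

(* the linearization of F at Y is the model value of the cut rho v v^T (or 0) *)
Lemma Fobj_linearization_le_Fhat C (Y X : 'M[R]_n) (v : 'cV[R]_n) :
  0 <= rho -> P *m P^T *m v = v -> nrm2 v = 1 -> lambda_max (- Y) = bil (- Y) v v ->
  X^T = X ->
  Fobj C rho Y + inner (if 0 < lambda_max (- Y) then C - rho *: (v *m v^T) else C) (X - Y)
    <= Fhat C rho Wbar P X.
Proof.
move=> rho0 Pv nv lmaxY sX; rewrite /Fobj; case: ifPn => [lmax_gt0|].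
  rewrite (max_l (ltW lmax_gt0)); apply: le_trans (Fhat_ge C sX (What_rank1 rho0 Pv nv)).
  rewrite lmaxY innerBl innerZl innerZl !inner_rank1 !bilNm !innerBr bilBm.
  lra.
rewrite -leNgt => lmax_le0; rewrite (max_r lmax_le0) mulr0 addr0.
apply: le_trans (Fhat_ge C sX (What0 rho0)).
by rewrite inner0l addr0 innerBr subrKC.
Qed.

End CuttingPlaneModel.

Section DualOptimality.
Variable R : realType.

Lemma slope_ge0_of_quad_ge0 (a c : R) : 0 <= c ->
  (forall t, 0 < t -> t <= 1 -> 0 <= t * a + t ^+ 2 * c) -> 0 <= a.
Proof.
move=> c0 quad_ge0; rewrite leNgt; apply/negP => a_lt0.
pose t := - a / (- a + c + 1).
have den_gt0 : 0 < - a + c + 1 by lra.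
have t_gt0 : 0 < t by rewrite divr_gt0 // oppr_gt0.
have t_le1 : t <= 1 by rewrite ler_pdivrMr // mul1r; lra.
have := quad_ge0 t t_gt0 t_le1.
have -> : t * a + t ^+ 2 * c = t * (a * (1 - a) / (- a + c + 1)) by rewrite /t; field; lra.
by rewrite pmulr_rge0 // pmulr_lge0 ?invr_gt0 //; nra.
Qed.

Lemma slope_eq0_of_quad_ge0 (a c : R) : 0 <= c ->
  (forall t, 0 <= t * a + t ^+ 2 * c) -> a = 0.
Proof.
move=> c0 quad_ge0; apply/le_anti/andP; split.
  rewrite -oppr_ge0; apply: (slope_ge0_of_quad_ge0 c0) => t _ _.
  by have := quad_ge0 (- t); rewrite sqrrN mulrN mulNr.
by apply: (slope_ge0_of_quad_ge0 c0) => t _ _.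
Qed.

Variables (n m k : nat) (A : 'I_m -> 'M[R]_n) (b : 'cV[R]_m) (C Omega Wbar : 'M[R]_n).
Variables (rho alpha : R) (P : 'M[R]_(n, k)) (Wst : 'M[R]_n) (yst : 'cV[R]_m).
Hypotheses (alpha_gt0 : 0 < alpha) (psdWb : psd Wbar) (Wst_in : What rho Wbar P Wst).
Hypothesis Wst_opt : forall W y, What rho Wbar P W ->
  dual_obj A b C Omega alpha Wst yst <= dual_obj A b C Omega alpha W y.
Hypothesis A_sym : forall i, (A i)^T = A i.

Let Z := Wst - C + Astar A yst.
Let Xst := Omega + alpha^-1 *: Z.

Let curvature_ge0 (D : 'M[R]_n) : 0 <= (2 * alpha)^-1 * frob2 D.
Proof. by rewrite mulr_ge0 ?frob2_ge0 // invr_ge0 mulr_ge0 // ltW. Qed.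

Lemma dual_opt_sym : C^T = C -> Omega^T = Omega -> Xst^T = Xst.
Proof.
move=> sC sOmega; have [sWst _] := What_psd psdWb Wst_in.
have sZ : Z^T = Z by rewrite linearD /= linearB /= sWst sC Astar_sym.
by rewrite /Xst linearD /= linearZ /= sOmega sZ.
Qed.

(* stationarity in y *)
Lemma dual_opt_feasible : Aop A Xst = b.
Proof.
apply/matrixP => i j; rewrite (ord1 j) mxE.
have : - vdot (b - Aop A Omega) (delta_mx i ord0)
         + alpha^-1 * inner (Astar A (delta_mx i ord0))^T Z = 0.
  apply: (slope_eq0_of_quad_ge0 (curvature_ge0 (Astar A (delta_mx i ord0)))) => t.
  have := Wst_opt (yst + t *: delta_mx i ord0) Wst_in.
  by rewrite dual_obj_shift_y ?gt_eqF // -addrA lerDl.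
by rewrite vdot_delta Astar_delta A_sym !mxE /Xst innerDr innerZr; lra.
Qed.

(* first-order optimality in W over the convex set hat W *)
Lemma dual_opt_variational W : What rho Wbar P W -> 0 <= inner (W - Wst) Xst.
Proof.
move=> hW; have [sW _] := What_psd psdWb hW; have [sWst _] := What_psd psdWb Wst_in.
have trD : (W - Wst)^T = W - Wst by rewrite linearB /= sW sWst.
suff : 0 <= inner (W - Wst) Omega + alpha^-1 * inner (W - Wst)^T Z.
  by rewrite trD /Xst innerDr innerZr.
apply: (slope_ge0_of_quad_ge0 (curvature_ge0 (W - Wst))) => t t_gt0 t_le1.
have := Wst_opt yst (What_convex (ltW t_gt0) t_le1 Wst_in hW).
by rewrite dual_obj_shift_W ?gt_eqF // -addrA lerDl.
Qed.

Lemma Fhat_le_at_dual_opt : Fhat C rho Wbar P Xst <= inner C Xst + inner Wst (- Xst).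
Proof.
rewrite /Fhat lerD2l; apply: (sup_le_ub _ (imageP _ Wst_in)) => _ [W hW <-].
by have := dual_opt_variational hW; rewrite innerBl !innerNr; lra.
Qed.

Lemma dual_opt_cut X : Aop A X = b ->
  Fhat C rho Wbar P Xst + inner (alpha *: (Omega - Xst)) (X - Xst)
    <= inner C X + inner Wst (- X).
Proof.
move=> AX; apply: le_trans (lerD Fhat_le_at_dual_opt (lexx _)) _.
have -> : alpha *: (Omega - Xst) = - Z.
  by rewrite /Xst opprD addrA subrr add0r scalerN scalerA mulfV ?gt_eqF // scale1r.
(* A^* y is orthogonal to X - Xst since A(X) = A(Xst) = b *)
have Astar_orth : inner (Astar A yst) (X - Xst) = 0.
  rewrite inner_Astar big1 // => i _; rewrite innerBr.
  have /matrixP /(_ i ord0) := dual_opt_feasible.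
  have /matrixP /(_ i ord0) := AX.
  by rewrite !mxE => -> ->; rewrite subrr mulr0.
rewrite innerNl /Z !innerDl !innerNl Astar_orth !innerBr !innerNr; lra.
Qed.

End DualOptimality.

Section Aggregation.
Variable R : realType.

Lemma orthonormal_mulmx n r p (P : 'M[R]_(n, r)) (Q : 'M[R]_(r, p)) :
  P^T *m P = 1%:M -> Q^T *m Q = 1%:M -> (P *m Q)^T *m (P *m Q) = 1%:M.
Proof. by move=> PP QQ; rewrite trmx_mul -(mulmxA Q^T) (mulmxA P^T) PP mul1mx QQ. Qed.

Lemma orthonormal_proj n k p (U : 'M[R]_(n, k)) (Y : 'M[R]_(n, p)) :
  U^T *m U = 1%:M -> (Y^T <= U^T)%MS -> U *m U^T *m Y = Y.
Proof.
move=> UU /submxP [D eY].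
have -> : Y = U *m D^T by rewrite -[Y]trmxK eY trmx_mul trmxK.
by rewrite -(mulmxA U) (mulmxA U^T) UU mul1mx.
Qed.

Section Blocks.
Variables (r p q : nat) (S : 'M[R]_r) (Q1 : 'M[R]_(r, p)) (Q2 : 'M[R]_(r, q)).
Variables (D1 : 'M[R]_p) (D2 : 'M[R]_q).
Hypotheses (QQ1 : Q1^T *m Q1 = 1%:M) (QQ2 : Q2^T *m Q2 = 1%:M) (Q12 : Q1^T *m Q2 = 0).
Hypothesis eS : S = Q1 *m D1 *m Q1^T + Q2 *m D2 *m Q2^T.

Lemma psd_blocks : psd S -> psd D1 /\ psd D2.
Proof.
have Q21 : Q2^T *m Q1 = 0 by rewrite -[Q1]trmxK -trmx_mul Q12 trmx0.
have <- : Q1^T *m S *m Q1 = D1.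
  rewrite eS mulmxDr mulmxDl !mulmxA QQ1 Q12 mul1mx !mul0mx addr0.
  by rewrite -(mulmxA _ Q1^T) QQ1 mulmx1.
have <- : Q2^T *m S *m Q2 = D2.
  rewrite eS mulmxDr mulmxDl !mulmxA QQ2 Q21 mul1mx !mul0mx add0r.
  by rewrite -(mulmxA _ Q2^T) QQ2 mulmx1.
by move=> psdS; split; [rewrite -{2}(trmxK Q1) | rewrite -{2}(trmxK Q2)]; exact: psd_congr.
Qed.

Lemma trace_blocks : \tr S = \tr D1 + \tr D2.
Proof. by rewrite eS mxtraceD !(mxtrace_mulC (_ *m _)) !mulmxA QQ1 QQ2 !mul1mx. Qed.

End Blocks.

Variables (n q : nat) (g : R) (Wbar : 'M[R]_n) (U2 : 'M[R]_(n, q)) (D2 : 'M[R]_q).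
Let Wnext := (g + \tr D2)^-1 *: (g *: Wbar + U2 *m D2 *m U2^T).

Lemma aggregate_psd : psd Wbar -> psd D2 -> 0 <= g -> 0 < g + \tr D2 -> psd Wnext.
Proof.
move=> psdWb psdD2 g0 c_gt0; apply: psdZ; first by rewrite invr_ge0 ltW.
by apply: psdD; [exact: psdZ | exact: psd_congr].
Qed.

Lemma aggregate_trace : \tr Wbar = 1 -> U2^T *m U2 = 1%:M -> 0 < g + \tr D2 -> \tr Wnext = 1.
Proof.
move=> trWb UU c_gt0.
rewrite mxtraceZ mxtraceD mxtraceZ trWb mulr1 mxtrace_mulC mulmxA UU mul1mx.
by rewrite mulVf ?gt_eqF.
Qed.

Lemma What_aggregate p k (rho : R) (U1 : 'M[R]_(n, p)) (D1 : 'M[R]_p) (Pn : 'M[R]_(n, k)) :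
  U1^T *m U1 = 1%:M -> psd D1 -> 0 < g + \tr D2 -> g + (\tr D1 + \tr D2) <= rho ->
  Pn^T *m Pn = 1%:M -> (U1^T <= Pn^T)%MS ->
  What rho Wnext Pn (g *: Wbar + U1 *m D1 *m U1^T + U2 *m D2 *m U2^T).
Proof.
move=> UU psdD1 c_gt0 tr_le PnPn sub.
pose Y := Pn^T *m U1.
have PnY : Pn *m Y = U1 by rewrite mulmxA orthonormal_proj.
have YY : Y^T *m Y = 1%:M.
  by rewrite trmx_mul trmxK -!mulmxA (mulmxA Pn) orthonormal_proj.
exists (g + \tr D2), (Y *m D1 *m Y^T); split.
- exact: psd_congr.
- exact: ltW.
- by rewrite mxtrace_mulC mulmxA YY mul1mx; lra.
- rewrite /Wnext scalerA mulfV ?gt_eqF // scale1r.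
  by rewrite !mulmxA orthonormal_proj // -(mulmxA _ Y^T) -trmx_mul PnY addrAC.
Qed.

End Aggregation.

Section TopEigenvectors.
Variable R : realType.
Variables (n p : nat) (M : 'M[R]_n) (V : 'M[R]_(n, p.+1)) (d : 'rV[R]_p.+1).
Hypotheses (sM : M^T = M) (VV : V^T *m V = 1%:M) (MV : M *m V = V *m diag_mx d).
Hypothesis d_sorted : forall i j : 'I_p.+1, (i <= j)%N -> d ord0 j <= d ord0 i.
Hypothesis d_top : forall (u : 'cV[R]_n) lam, u != 0 -> V^T *m u = 0 ->
  M *m u = lam *: u -> forall i, lam <= d ord0 i.

Let v := col ord0 V.

Lemma col0_nrm2 : nrm2 v = 1.
Proof.
by rewrite /nrm2 /v colE trmx_mul -mulmxA (mulmxA V^T) VV mul1mx trmx_delta mul_delta_mx mxE !eqxx.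
Qed.

Lemma col0_eigen : M *m v = d ord0 ord0 *: v.
Proof.
rewrite /v colE mulmxA MV -mulmxA scalemxAr; congr (_ *m _).
apply/matrixP => a c; rewrite mul_diag_mx !mxE (ord1 c).
by case: eqP => [->|_] //=; rewrite !mulr0.
Qed.

(* split u into its part in the span of V, where M acts by d, and an orthogonal eigenvector *)
Lemma eigenvalue_le_top (u : 'cV[R]_n) lam : u != 0 -> M *m u = lam *: u -> lam <= d ord0 ord0.
Proof.
move=> un0 Mu.
pose w := V^T *m u; pose up := u - V *m w.
have VtM : V^T *m M = diag_mx d *m V^T by rewrite -sM -trmx_mul MV trmx_mul tr_diag_mx.
have Dw : diag_mx d *m w = lam *: w by rewrite mulmxA -VtM -mulmxA Mu -scalemxAr.
have Mup : M *m up = lam *: up.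
  by rewrite mulmxBr Mu mulmxA MV -mulmxA Dw -scalemxAr scalerBr.
have Vup : V^T *m up = 0 by rewrite mulmxBr mulmxA VV mul1mx subrr.
clearbody w.
have [up0|upn0] := eqVneq up 0; last exact: d_top Vup Mup ord0.
have wn0 : w != 0.
  apply: contra un0 => /eqP w0; apply/eqP.
  by move/eqP: up0; rewrite /up w0 mulmx0 subr0 => /eqP.
have [j wj] : exists j, w j ord0 != 0.
  apply/existsP; apply: contraR wn0 => /existsPn w0; apply/eqP/matrixP => a c.
  by rewrite (ord1 c) [RHS]mxE; move/negPn/eqP: (w0 a).
move/matrixP: Dw => /(_ j ord0); rewrite mul_diag_mx !mxE => dj.
by rewrite -(mulIf wj dj); exact: d_sorted.
Qed.

Lemma lambda_max_col0 : lambda_max M = bil M v v.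
Proof.
have vn0 : v != 0.
  apply/eqP => v0; move: col0_nrm2; rewrite v0 /nrm2 mulmx0 mxE => /eqP.
  by rewrite eq_sym oner_eq0.
rewrite (bil_eigen col0_eigen) col0_nrm2 mulr1.
by apply: lambda_max_eq sM vn0 col0_eigen _ => a z zn0 Mz; exact: eigenvalue_le_top Mz.
Qed.

End TopEigenvectors.
Theorem mainTheorem5 (R : realType) (n m r rp rc k : nat)
  (C : 'M[R]_n) (A : 'I_m -> 'M[R]_n) (b : 'cV[R]_m)
  (rho alpha : R) (Omega Wbar : 'M[R]_n) (P : 'M[R]_(n, r))
  (Wst : 'M[R]_n) (yst : 'cV[R]_m) (gst : R) (Sst : 'M[R]_r)
  (Q1 : 'M[R]_(r, rp)) (Q2 : 'M[R]_(r, r - rp))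
  (s1 : 'rV[R]_rp) (s2 : 'rV[R]_(r - rp))
  (V : 'M[R]_(n, rc.+1)) (d : 'rV[R]_(rc.+1))
  (Pn : 'M[R]_(n, k)) :
  (* data *)
  C^T = C -> (forall i, (A i)^T = A i) ->
  (forall y : 'cV[R]_m, Astar A y = 0 -> y = 0) ->
  0 < rho -> 0 < alpha ->
  Omega^T = Omega ->
  psd Wbar -> \tr Wbar = 1 ->
  P^T *m P = 1%:M ->
  (rp <= r)%N ->
  (* (Wst, yst) minimizes the dual subproblem *)
  What rho Wbar P Wst ->
  (forall W y, What rho Wbar P W ->
     dual_obj A b C Omega alpha Wst yst <= dual_obj A b C Omega alpha W y) ->
  Wst = gst *: Wbar + P *m Sst *m P^T ->
  psd Sst -> 0 <= gst -> gst + \tr Sst <= rho ->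
  let Xst := Omega + alpha^-1 *: (Wst - C + Astar A yst) in
  (* eigendecomposition of Sst, Sigma1 holding the rp largest eigenvalues *)
  Q1^T *m Q1 = 1%:M -> Q2^T *m Q2 = 1%:M -> Q1^T *m Q2 = 0 ->
  Sst = Q1 *m diag_mx s1 *m Q1^T + Q2 *m diag_mx s2 *m Q2^T ->
  (forall i j, s2 ord0 j <= s1 ord0 i) ->
  (* V : orthonormal eigenvectors of -Xst for its rc.+1 largest eigenvalues,
     listed in nonincreasing order *)
  V^T *m V = 1%:M ->
  (- Xst) *m V = V *m diag_mx d ->
  (forall i j : 'I_rc.+1, (i <= j)%N -> d ord0 j <= d ord0 i) ->
  (forall (u : 'cV[R]_n) (lam : R), u != 0 -> V^T *m u = 0 ->
     (- Xst) *m u = lam *: u -> forall i, lam <= d ord0 i) ->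
  (* new basis P_{t+1} *)
  Pn^T *m Pn = 1%:M ->
  (Pn^T == (row_mx V (P *m Q1))^T)%MS ->
  0 < gst + \tr (diag_mx s2) ->
  let Wbarn := (gst + \tr (diag_mx s2))^-1 *:
                 (gst *: Wbar + P *m Q2 *m diag_mx s2 *m Q2^T *m P^T) in
  let v := col ord0 V in
  let g := if 0 < lambda_max (- Xst) then C - rho *: (v *m v^T) else C in
  (* (i) *)
  (forall X : 'M[R]_n, X^T = X -> Fhat C rho Wbarn Pn X <= Fobj C rho X)
  (* (ii) *)
  /\ (forall X : 'M[R]_n, X^T = X ->
        Fobj C rho Xst + inner g (X - Xst) <= Fhat C rho Wbarn Pn X)
  (* (ii'): g is a subgradient of F at Xst *)
  /\ (forall X : 'M[R]_n, X^T = X ->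
        Fobj C rho Xst + inner g (X - Xst) <= Fobj C rho X)
  (* (iii) *)
  /\ (forall X : 'M[R]_n, X^T = X -> Aop A X = b ->
        Fhat C rho Wbar P Xst + inner (alpha *: (Omega - Xst)) (X - Xst)
          <= Fhat C rho Wbarn Pn X).
Proof.
move=> sC sA _ rho_gt0 alpha_gt0 sOmega psdWb trWb PP _ Wst_in Wst_opt eWst psdS gst_ge0
  trS_le Xst QQ1 QQ2 Q12 eS _ VV MV d_sorted d_top PnPn colsp c_gt0 Wbarn v g.
have [psdD1 psdD2] := psd_blocks QQ1 QQ2 Q12 eS psdS.
have eWbarn : Wbarn = (gst + \tr (diag_mx s2))^-1 *:
    (gst *: Wbar + (P *m Q2) *m diag_mx s2 *m (P *m Q2)^T) by rewrite trmx_mul !mulmxA.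
have psdWn : psd Wbarn by rewrite eWbarn; exact: aggregate_psd.
have trWn : \tr Wbarn = 1 by rewrite eWbarn; apply: aggregate_trace (orthonormal_mulmx PP QQ2) _.
have [V_sub PQ1_sub] : (V^T <= Pn^T)%MS /\ ((P *m Q1)^T <= Pn^T)%MS.
  by case/andP: colsp => _; rewrite tr_row_mx col_mx_sub => /andP.
have Wst_next : What rho Wbarn Pn Wst.
  have -> : Wst = gst *: Wbar + (P *m Q1) *m diag_mx s1 *m (P *m Q1)^T
                  + (P *m Q2) *m diag_mx s2 *m (P *m Q2)^T.
    by rewrite eWst eS mulmxDr mulmxDl !trmx_mul !mulmxA addrA.
  rewrite eWbarn; apply: What_aggregate (orthonormal_mulmx PP QQ1) psdD1 c_gt0 _ PnPn PQ1_sub.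
  by rewrite -(trace_blocks QQ1 QQ2 eS).
have sXst : (- Xst)^T = - Xst.
  by rewrite linearN /= (dual_opt_sym alpha yst psdWb Wst_in sA sC sOmega).
have lmax := lambda_max_col0 sXst VV MV d_sorted d_top.
have Pv : Pn *m Pn^T *m v = v by rewrite /v colE mulmxA orthonormal_proj.
have Fhat_le X : X^T = X -> Fhat C rho Wbarn Pn X <= Fobj C rho X.
  by move=> sX; apply: Fhat_le_Fobj => //; exact: ltW.
have cut X : X^T = X -> Fobj C rho Xst + inner g (X - Xst) <= Fhat C rho Wbarn Pn X.
  by move=> sX; apply: Fobj_linearization_le_Fhat => //; [exact: ltW | exact: col0_nrm2].
split; first exact: Fhat_le.
split; first exact: cut.
split; first by move=> X sX; exact: le_trans (cut X sX) (Fhat_le X sX).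
move=> X sX AX; apply: le_trans (Fhat_ge psdWn trWn PnPn C sX Wst_next).
exact: dual_opt_cut alpha_gt0 psdWb Wst_in Wst_opt sA X AX.
Qed.
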